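(* Let $A$ be a densely defined closed operator in a complex Hilbert space $\mathcal{H}$ such that $\operatorname{Num}(A)$ has an interior point, $\operatorname{Num}(A)\neq\mathbb{C}$, $\operatorname{D}(A)\subset\operatorname{D}(A^* )$ and $\sigma(A)\subset\overline{\operatorname{Num}}(A)$. If $\lambda\in\partial\operatorname{Num}(A)$ is a point of unilateral infinite curvature of $\partial\overline{\operatorname{Num}}(A)$, then $\lambda\in\sigma_{ap}(A)$.
   Context: $\operatorname{Num}(A)=\{\langle Af,f\rangle: f\in\operatorname{D}(A),\|f\|=1\}$, $\overline{\operatorname{Num}}(A)$ its closure. Approximate point spectrum: $\sigma_{ap}(A)=\{\lambda\in\mathbb{C}:\exists (u_n)\subset\operatorname{D}(A),\ \|u_n\|=1,\ (A-\lambda)u_n\to0\}$. Curvature conventions. Let $\Omega\subset\mathbb{C}$ be a closed convex set with nonempty interior and $\lambda\in\partial\Omega$. There is at least one supporting line of $\Omega$ through $\lambda$; $\lambda$ is called a corner point if there is more than one. If $\lambda$ is a corner point, $\Omega$ lies in a closed sector with vertex $\lambda$ and semivertical angle $<\pi/2$; take the smallest such sector and let $l_\lambda$ be the supporting line through $\lambda$ orthogonal to the axis of this sector; otherwise $l_\lambda$ is the unique supporting line. Use rectangular coordinates $(\xi,\eta)$ with origin at $\lambda$, $\xi$-axis equal to $l_\lambda$, oriented so that $\Omega\subset\{\eta\ge 0\}$. Let $D'_\varepsilon=\{(\xi,\eta):\xi^2+\eta^2\le\varepsilon^2,\ \xi\neq 0\}$. Define $\gamma_u^+(\lambda)=\lim_{\varepsilon\downarrow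 0}\sup\{\eta/\xi^2:(\xi,\eta)\in\partial\Omega\cap D'_\varepsilon,\ \xi>0\}$ and $\gamma_l^+(\lambda)$ the same with $\inf$ in place of $\sup$; $\gamma_u^-(\lambda),\gamma_l^-(\lambda)$ are defined analogously with $\xi<0$. Set $\gamma_u(\lambda)=\max(\gamma_u^+(\lambda),\gamma_u^-(\lambda))$, $\gamma_l(\lambda)=\min(\gamma_l^+(\lambda),\gamma_l^-(\lambda))$. The point $\lambda$ is of infinite upper curvature if $\gamma_u(\lambda)=\infty$, and of unilateral infinite curvature if $\gamma_l^+(\lambda)=\infty$ or $\gamma_l^-(\lambda)=\infty$. For an operator $A$, these notions at $\lambda\in\partial\operatorname{Num}(A)$ refer to $\Omega=\overline{\operatorname{Num}}(A)$. *)

From Stdlib Require Import Reals.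
Open Scope R_scope.

Record cplx := mkC { Cre : R; Cim : R }.
Definition C0 : cplx := mkC 0 0.
Definition C1 : cplx := mkC 1 0.
Definition Ci : cplx := mkC 0 1.
Definition Cadd (z w : cplx) : cplx := mkC (Cre z + Cre w) (Cim z + Cim w).
Definition Copp (z : cplx) : cplx := mkC (- Cre z) (- Cim z).
Definition Csub (z w : cplx) : cplx := Cadd z (Copp w).
Definition Cmul (z w : cplx) : cplx :=
  mkC (Cre z * Cre w - Cim z * Cim w) (Cre z * Cim w + Cim z * Cre w).
Definition Cconj (z : cplx) : cplx := mkC (Cre z) (- Cim z).
Definition Cmod (z : cplx) : R := sqrt (Cre z ^ 2 + Cim z ^ 2).

(* inner product: linear in the first argument, conjugate-linear in the second *)
Record HilbertSpace := {
  hcarrier :> Type;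
  hadd : hcarrier -> hcarrier -> hcarrier;
  hzero : hcarrier;
  hopp : hcarrier -> hcarrier;
  hscal : cplx -> hcarrier -> hcarrier;
  inner : hcarrier -> hcarrier -> cplx;
  hadd_assoc : forall x y z, hadd x (hadd y z) = hadd (hadd x y) z;
  hadd_comm : forall x y, hadd x y = hadd y x;
  hadd_zero : forall x, hadd x hzero = x;
  hadd_opp : forall x, hadd x (hopp x) = hzero;
  hscal_one : forall x, hscal C1 x = x;
  hscal_assoc : forall a b x, hscal a (hscal b x) = hscal (Cmul a b) x;
  hscal_addv : forall a x y, hscal a (hadd x y) = hadd (hscal a x) (hscal a y);
  hscal_adds : forall a b x, hscal (Cadd a b) x = hadd (hscal a x) (hscal b x);
  inner_add_l : forall x y z, inner (hadd x y) z = Cadd (inner x z) (inner y z);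
  inner_scal_l : forall a x y, inner (hscal a x) y = Cmul a (inner x y);
  inner_conj_sym : forall x y, inner y x = Cconj (inner x y);
  inner_pos : forall x, 0 <= Cre (inner x x);
  inner_def : forall x, inner x x = C0 -> x = hzero;
  hcomplete : forall u : nat -> hcarrier,
    (forall eps, 0 < eps -> exists N, forall n m, (N <= n)%nat -> (N <= m)%nat ->
        sqrt (Cre (inner (hadd (u n) (hopp (u m))) (hadd (u n) (hopp (u m))))) < eps) ->
    exists l, forall eps, 0 < eps -> exists N, forall n, (N <= n)%nat ->
        sqrt (Cre (inner (hadd (u n) (hopp l)) (hadd (u n) (hopp l)))) < eps
}.

Arguments hadd {h}. Arguments hzero {h}. Arguments hopp {h}.
Arguments hscal {h}. Arguments inner {h}.

Definition hsub {Hs : HilbertSpace} (x y : Hs) : Hs := hadd x (hopp y).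
Definition hnorm {Hs : HilbertSpace} (x : Hs) : R := sqrt (Cre (inner x x)).
Definition hconv {Hs : HilbertSpace} (u : nat -> Hs) (l : Hs) : Prop :=
  forall eps, 0 < eps -> exists N, forall n, (N <= n)%nat -> hnorm (hsub (u n) l) < eps.

(* An operator is a pair (D, A): D : H -> Prop is the domain, A : H -> H,
   whose values outside D are irrelevant. *)
Definition is_lin_op {Hs : HilbertSpace} (D : Hs -> Prop) (A : Hs -> Hs) : Prop :=
  D hzero /\
  (forall x y, D x -> D y -> D (hadd x y)) /\
  (forall a x, D x -> D (hscal a x)) /\
  (forall x y, D x -> D y -> A (hadd x y) = hadd (A x) (A y)) /\
  (forall a x, D x -> A (hscal a x) = hscal a (A x)).

Definition densely_defined {Hs : HilbertSpace} (D : Hs -> Prop) : Prop :=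
  forall x eps, 0 < eps -> exists y, D y /\ hnorm (hsub x y) < eps.

Definition closed_op {Hs : HilbertSpace} (D : Hs -> Prop) (A : Hs -> Hs) : Prop :=
  forall (u : nat -> Hs) x y, (forall n, D (u n)) -> hconv u x ->
    hconv (fun n => A (u n)) y -> D x /\ A x = y.

Definition adj_dom {Hs : HilbertSpace} (D : Hs -> Prop) (A : Hs -> Hs) (y : Hs) : Prop :=
  exists z, forall x, D x -> inner (A x) y = inner x z.

Definition NumRange {Hs : HilbertSpace} (D : Hs -> Prop) (A : Hs -> Hs) (w : cplx) : Prop :=
  exists f, D f /\ hnorm f = 1 /\ w = inner (A f) f.

Definition resolvent {Hs : HilbertSpace} (D : Hs -> Prop) (A : Hs -> Hs) (lam : cplx) : Prop :=
  (forall y, exists x, D x /\ hsub (A x) (hscal lam x) = y) /\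
  (exists M, forall x, D x -> hnorm x <= M * hnorm (hsub (A x) (hscal lam x))).
Definition spectrum {Hs : HilbertSpace} (D : Hs -> Prop) (A : Hs -> Hs) (lam : cplx) : Prop :=
  ~ resolvent D A lam.

Definition approx_point_spectrum {Hs : HilbertSpace} (D : Hs -> Prop) (A : Hs -> Hs)
  (lam : cplx) : Prop :=
  exists u : nat -> Hs, (forall n, D (u n)) /\ (forall n, hnorm (u n) = 1) /\
    hconv (fun n => hsub (A (u n)) (hscal lam (u n))) hzero.

Definition ccl (S : cplx -> Prop) (w : cplx) : Prop :=
  forall eps, 0 < eps -> exists z, S z /\ Cmod (Csub w z) < eps.
Definition cinterior (S : cplx -> Prop) (w : cplx) : Prop :=
  exists eps, 0 < eps /\ forall z, Cmod (Csub z w) < eps -> S z.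
Definition cbdry (S : cplx -> Prop) (w : cplx) : Prop := ccl S w /\ ~ cinterior S w.

(* A supporting line of Om through lam is encoded by its unit normal n pointing
   towards Om:  Om is contained in { w : Re((w - lam) * conj n) >= 0 }. *)
Definition supporting_normal (Om : cplx -> Prop) (lam n : cplx) : Prop :=
  Cmod n = 1 /\ forall w, Om w -> 0 <= Cre (Cmul (Csub w lam) (Cconj n)).

(* more than one supporting line through lam (n and -n give the same line) *)
Definition corner_point (Om : cplx -> Prop) (lam : cplx) : Prop :=
  exists n1 n2, supporting_normal Om lam n1 /\ supporting_normal Om lam n2 /\
    n1 <> n2 /\ n1 <> Copp n2.

(* closed sector with vertex lam, unit axis direction d, semivertical angle al *)
Definition in_sector (lam d : cplx) (al : R) (w : cplx) : Prop :=
  Cmod (Csub w lam) * cos al <= Cre (Cmul (Csub w lam) (Cconj d)).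
Definition sector_contains (Om : cplx -> Prop) (lam d : cplx) (al : R) : Prop :=
  Cmod d = 1 /\ 0 <= al < PI / 2 /\ forall w, Om w -> in_sector lam d al w.
Definition smallest_sector (Om : cplx -> Prop) (lam d : cplx) (al : R) : Prop :=
  sector_contains Om lam d al /\
  forall d' al', sector_contains Om lam d' al' ->
    forall w, in_sector lam d al w -> in_sector lam d' al' w.

(* n is the inward unit normal of the distinguished supporting line l_lam *)
Definition l_normal (Om : cplx -> Prop) (lam n : cplx) : Prop :=
  (corner_point Om lam -> exists al, smallest_sector Om lam n al) /\
  (~ corner_point Om lam -> supporting_normal Om lam n).

(* coordinates (xi, eta) with origin lam, eta-axis along n, xi-axis along -i n *)
Definition xi_coord (lam n w : cplx) : R :=
  Cre (Cmul (Csub w lam) (Cconj (Cmul (Copp Ci) n))).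
Definition eta_coord (lam n w : cplx) : R :=
  Cre (Cmul (Csub w lam) (Cconj n)).

(* gamma_l^+(lam) = lim_{eps->0} inf { eta/xi^2 : (xi,eta) in bd Om /\ D'_eps, xi > 0 } = +infinity *)
Definition gamma_l_plus_infinite (Om : cplx -> Prop) (lam n : cplx) : Prop :=
  forall M, exists delta, 0 < delta /\ forall eps, 0 < eps < delta ->
    forall w, cbdry Om w ->
      xi_coord lam n w ^ 2 + eta_coord lam n w ^ 2 <= eps ^ 2 ->
      xi_coord lam n w <> 0 -> 0 < xi_coord lam n w ->
      M <= eta_coord lam n w / xi_coord lam n w ^ 2.
Definition gamma_l_minus_infinite (Om : cplx -> Prop) (lam n : cplx) : Prop :=
  forall M, exists delta, 0 < delta /\ forall eps, 0 < eps < delta ->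
    forall w, cbdry Om w ->
      xi_coord lam n w ^ 2 + eta_coord lam n w ^ 2 <= eps ^ 2 ->
      xi_coord lam n w <> 0 -> xi_coord lam n w < 0 ->
      M <= eta_coord lam n w / xi_coord lam n w ^ 2.

Definition unilateral_infinite_curvature (Om : cplx -> Prop) (lam : cplx) : Prop :=
  exists n, l_normal Om lam n /\
    (gamma_l_plus_infinite Om lam n \/ gamma_l_minus_infinite Om lam n).

(* If [lam] is not in the approximate point spectrum, [A - lam] is bounded below, by [c] say.
   On the side where the boundary of the closed numerical range has infinite curvature, the
   tangent line at [lam] contains points [z] outside that range arbitrarily close to [lam]; they
   lie in the resolvent set.  Take a unit vector [f] with [<Af, f>] very close to [lam] and solve
   [(A - z) h = n f], [n] the inner normal; the lower bound gives [|h| <= 8 / (7 c)].  In the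
   coordinates [(xi, eta)] at [lam], [<Ag, g> - lam |g|^2] for [g = f + s h] is a quadratic
   polynomial in [s]: since [eta >= 0] on the numerical range, the normal component of its
   linear part almost vanishes, while its tangential component is close to [2 Im s].  So
   [s = +-i t] moves the point by about [2 t] along the tangent but only [O(t^2)] away from it,
   contradicting [eta >= M xi^2] near [lam] for [M] large. *)

From Pilot Require Import Defs.
From Stdlib Require Import Reals Lra Psatz Classical ClassicalEpsilon.
Open Scope R_scope.

Lemma cplx_ext (z w : cplx) : Cre z = Cre w -> Cim z = Cim w -> z = w.
Proof. destruct z, w; simpl; intros; subst; reflexivity. Qed.

Ltac cplx_ring := apply cplx_ext; simpl; ring.

Lemma Cmod_sq z : Cmod z ^ 2 = Cre z ^ 2 + Cim z ^ 2.
Proof. unfold Cmod. rewrite pow2_sqrt; [reflexivity | nra]. Qed.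

Lemma Cmod_ge0 z : 0 <= Cmod z.
Proof. apply sqrt_pos. Qed.

Lemma Cre_bound z : - Cmod z <= Cre z <= Cmod z.
Proof. pose proof (Cmod_sq z); pose proof (Cmod_ge0 z). split; nra. Qed.

Lemma Cim_bound z : - Cmod z <= Cim z <= Cmod z.
Proof. pose proof (Cmod_sq z); pose proof (Cmod_ge0 z). split; nra. Qed.

Lemma Cmod_le z r : 0 <= r -> Cre z ^ 2 + Cim z ^ 2 <= r ^ 2 -> Cmod z <= r.
Proof. intros. pose proof (Cmod_sq z); pose proof (Cmod_ge0 z). nra. Qed.

Lemma Cmod_mul z w : Cmod (Cmul z w) = Cmod z * Cmod w.
Proof. unfold Cmod. rewrite <- sqrt_mult by nra. f_equal. destruct z, w; simpl; ring. Qed.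

Lemma Cmod_conj z : Cmod (Cconj z) = Cmod z.
Proof. unfold Cmod; simpl; f_equal; ring. Qed.

Lemma Cmod_sub_sym z w : Cmod (Csub z w) = Cmod (Csub w z).
Proof. unfold Cmod; simpl; f_equal; ring. Qed.

Lemma Cmod_real r : Cmod (mkC r 0) = Rabs r.
Proof.
  unfold Cmod; cbn [Cre Cim]. replace (r ^ 2 + 0 ^ 2) with (Rsqr r) by (unfold Rsqr; ring).
  apply sqrt_Rsqr_abs.
Qed.

Lemma Cmod_add z w : Cmod (Cadd z w) <= Cmod z + Cmod w.
Proof.
  apply Cmod_le; [pose proof (Cmod_ge0 z); pose proof (Cmod_ge0 w); lra |].
  pose proof (Cmod_sq z); pose proof (Cmod_sq w).
  pose proof (Cmod_ge0 z); pose proof (Cmod_ge0 w).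
  assert (Hcs : Cre z * Cre w + Cim z * Cim w <= Cmod z * Cmod w).
  { apply Rsqr_incr_0_var; [| nra]. unfold Rsqr.
    pose proof (pow2_ge_0 (Cre z * Cim w - Cim z * Cre w)). nra. }
  simpl. nra.
Qed.

Section HilbertSpaceFacts.

Variable Hs : HilbertSpace.
Implicit Types x y : Hs.

Lemma hadd_self_eq x : hadd x x = x -> x = hzero.
Proof.
  intro E. rewrite <- (hadd_opp Hs x). rewrite <- E at 2.
  rewrite <- hadd_assoc, hadd_opp, hadd_zero. reflexivity.
Qed.

Lemma hopp_0 : hopp (@hzero Hs) = hzero.
Proof. rewrite <- (hadd_zero Hs (hopp hzero)), hadd_comm, hadd_opp. reflexivity. Qed.

Lemma hscal_0 x : hscal Defs.C0 x = hzero.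
Proof. apply hadd_self_eq. rewrite <- hscal_adds. f_equal. cplx_ring. Qed.

Lemma hopp_scal x : hopp x = hscal (mkC (-1) 0) x.
Proof.
  assert (E : hadd x (hscal (mkC (-1) 0) x) = hzero).
  { rewrite <- (hscal_one Hs x) at 1. rewrite <- hscal_adds.
    replace (Cadd Defs.C1 (mkC (-1) 0)) with Defs.C0 by cplx_ring. apply hscal_0. }
  rewrite <- (hadd_zero Hs (hopp x)), <- E, hadd_assoc, (hadd_comm _ (hopp x)), hadd_opp.
  rewrite hadd_comm, hadd_zero. reflexivity.
Qed.

Lemma inner_0_l y : inner hzero y = Defs.C0.
Proof. rewrite <- (hscal_0 hzero), inner_scal_l. cplx_ring. Qed.

Lemma inner_0_r y : inner y hzero = Defs.C0.
Proof. rewrite inner_conj_sym, inner_0_l. cplx_ring. Qed.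

Lemma inner_add_r x y z : inner x (hadd y z) = Cadd (inner x y) (inner x z).
Proof.
  rewrite inner_conj_sym, inner_add_l, (inner_conj_sym _ y x), (inner_conj_sym _ z x).
  cplx_ring.
Qed.

Lemma inner_scal_r a x y : inner x (hscal a y) = Cmul (Cconj a) (inner x y).
Proof. rewrite inner_conj_sym, inner_scal_l, (inner_conj_sym _ y x). cplx_ring. Qed.

Lemma inner_self x : inner x x = mkC (hnorm x ^ 2) 0.
Proof.
  apply cplx_ext; cbn [Cre Cim].
  - unfold hnorm. rewrite pow2_sqrt; [reflexivity | apply inner_pos].
  - pose proof (inner_conj_sym Hs x x) as E. apply (f_equal Cim) in E. simpl in E. lra.
Qed.

Lemma hnorm_ge0 x : 0 <= hnorm x.
Proof. apply sqrt_pos. Qed.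

Lemma hnorm_eq0 x : hnorm x = 0 -> x = hzero.
Proof. intro E. apply inner_def. rewrite inner_self, E. cplx_ring. Qed.

Lemma hnorm_scal a x : hnorm (hscal a x) = Cmod a * hnorm x.
Proof.
  unfold hnorm, Cmod. rewrite inner_scal_l, inner_scal_r, <- sqrt_mult by (nra || apply inner_pos).
  f_equal. rewrite inner_self. unfold hnorm. rewrite pow2_sqrt by apply inner_pos.
  destruct a; simpl; ring.
Qed.

Lemma Cauchy_Schwarz x y : Cmod (inner x y) <= hnorm x * hnorm y.
Proof.
  pose proof (hnorm_ge0 x); pose proof (hnorm_ge0 y).
  apply Cmod_le; [nra |].
  destruct (Req_dec (hnorm y) 0) as [Hy | Hy].
  { apply hnorm_eq0 in Hy. subst. rewrite inner_0_r. simpl. nra. }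
  (* expand [0 <= |x - (<x,y>/|y|^2) y|^2] *)
  set (p := inner x y). set (k := / hnorm y ^ 2).
  pose proof (inner_pos Hs (hadd x (hscal (mkC (- (k * Cre p)) (- (k * Cim p))) y))) as P.
  rewrite !inner_add_l, !inner_add_r, !inner_scal_l, !inner_scal_r, !inner_self in P.
  rewrite (inner_conj_sym Hs x y) in P. fold p in P.
  assert (Hk : k * hnorm y ^ 2 = 1) by (unfold k; field; lra).
  assert (0 < k) by (unfold k; apply Rinv_0_lt_compat; nra).
  destruct p as [p1 p2]; simpl in P |- *. nra.
Qed.

Lemma hnorm_triangle x y : hnorm (hadd x y) <= hnorm x + hnorm y.
Proof.
  pose proof (inner_self (hadd x y)) as E.
  rewrite inner_add_l, !inner_add_r, !inner_self, (inner_conj_sym Hs x y) in E.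
  apply (f_equal Cre) in E. simpl in E.
  pose proof (Cre_bound (inner x y)). pose proof (Cauchy_Schwarz x y).
  pose proof (hnorm_ge0 x); pose proof (hnorm_ge0 y); pose proof (hnorm_ge0 (hadd x y)).
  nra.
Qed.

Lemma hnorm_opp x : hnorm (hopp x) = hnorm x.
Proof. rewrite hopp_scal, hnorm_scal, Cmod_real, Rabs_left by lra. ring. Qed.

Lemma hnorm_triangle_rev x y : hnorm x - hnorm y <= hnorm (hadd x y).
Proof.
  pose proof (hnorm_triangle (hadd x y) (hopp y)) as T.
  rewrite <- hadd_assoc, hadd_opp, hadd_zero, hnorm_opp in T. lra.
Qed.

Lemma hconv_0_of_inv_bound (u : nat -> Hs) :
  (forall k, hnorm (u k) <= / INR (S k)) -> hconv u hzero.
Proof.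
  intros Hu eps Heps. destruct (archimed_cor1 eps Heps) as [N [HN HN0]].
  exists N. intros k Hk. unfold hsub. rewrite hopp_0, hadd_zero.
  specialize (Hu k). apply lt_0_INR in HN0. apply le_INR in Hk. rewrite S_INR in Hu.
  assert (/ (INR k + 1) <= / INR N) by (apply Rinv_le_contravar; lra).
  lra.
Qed.

End HilbertSpaceFacts.

Definition shift {Hs : HilbertSpace} (A : Hs -> Hs) (lam : cplx) (x : Hs) : Hs :=
  hsub (A x) (hscal lam x).

(* [coord_form A lam n g g / |g|^2] is [eta - i xi] at the numerical range point of [g]. *)
Definition coord_form {Hs : HilbertSpace} (A : Hs -> Hs) (lam n : cplx) (x y : Hs) : cplx :=
  Cmul (Cconj n) (inner (shift A lam x) y).

Definition numrange_point {Hs : HilbertSpace} (A : Hs -> Hs) (g : Hs) : cplx :=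
  Cmul (mkC (/ hnorm g ^ 2) 0) (inner (A g) g).

Definition line_form (w u v r s : cplx) : cplx :=
  Cadd (Cadd w (Cmul (Cconj s) u)) (Cadd (Cmul s v) (Cmul (Cmul s (Cconj s)) r)).

Section Operator.

Variables (Hs : HilbertSpace) (D : Hs -> Prop) (A : Hs -> Hs).
Hypothesis Hlin : is_lin_op D A.

Lemma shift_scal lam a x : D x -> shift A lam (hscal a x) = hscal a (shift A lam x).
Proof.
  destruct Hlin as [_ [_ [_ [_ HAscal]]]]. intro Hx.
  unfold shift, hsub. rewrite HAscal, hscal_addv, !hopp_scal, !hscal_assoc by exact Hx.
  do 2 f_equal. cplx_ring.
Qed.

Lemma shift_change_point lam z x :
  shift A lam x = hadd (shift A z x) (hscal (Csub z lam) x).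
Proof.
  unfold shift, hsub. rewrite !hopp_scal, !hscal_assoc, <- hadd_assoc, <- hscal_adds.
  do 2 f_equal. cplx_ring.
Qed.

Lemma shift_small_unit lam r x : D x -> hnorm (shift A lam x) < r * hnorm x ->
  exists u, D u /\ hnorm u = 1 /\ hnorm (shift A lam u) <= r.
Proof.
  intros Hx Hlt. pose proof (hnorm_ge0 _ (shift A lam x)).
  assert (Hpos : 0 < hnorm x).
  { destruct (hnorm_ge0 _ x) as [| E]; [assumption |]. rewrite <- E, Rmult_0_r in Hlt. lra. }
  set (a := / hnorm x). assert (0 < a) by (apply Rinv_0_lt_compat; exact Hpos).
  exists (hscal (mkC a 0) x). destruct Hlin as [_ [_ [HDscal _]]].
  rewrite shift_scal, !hnorm_scal, Cmod_real, Rabs_right by (auto || lra).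
  split; [auto | split; [unfold a; field; lra |]].
  apply (Rmult_le_reg_l (hnorm x)); [exact Hpos |].
  replace (hnorm x * (a * hnorm (shift A lam x))) with (hnorm (shift A lam x))
    by (unfold a; field; lra).
  lra.
Qed.

Lemma not_approx_point_spectrum_bounded_below lam :
  ~ approx_point_spectrum D A lam ->
  exists c, 0 < c /\ forall x, D x -> c * hnorm x <= hnorm (shift A lam x).
Proof.
  intro Hnap. apply NNPP. intro Hnb. apply Hnap.
  assert (Hsmall : forall k : nat, exists u,
             D u /\ hnorm u = 1 /\ hnorm (shift A lam u) <= / INR (S k)).
  { intro k. apply NNPP. intro Hk. apply Hnb.
    exists (/ INR (S k)). split; [apply Rinv_0_lt_compat, lt_0_INR; auto with arith |].
    intros x Hx. apply Rnot_lt_le. intro Hlt. exact (Hk (shift_small_unit _ _ _ Hx Hlt)). }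
  destruct (choice _ Hsmall) as [u Hu].
  exists u. split; [| split]; try (intro k; apply Hu).
  apply hconv_0_of_inv_bound. intro k. apply Hu.
Qed.

Lemma inner_shift lam x y :
  inner (shift A lam x) y = Csub (inner (A x) y) (Cmul lam (inner x y)).
Proof. unfold shift, hsub. rewrite inner_add_l, hopp_scal, !inner_scal_l. cplx_ring. Qed.

Lemma coord_form_line lam n f h s : D f -> D h ->
  coord_form A lam n (hadd f (hscal s h)) (hadd f (hscal s h)) =
  line_form (coord_form A lam n f f) (coord_form A lam n f h)
            (coord_form A lam n h f) (coord_form A lam n h h) s.
Proof.
  destruct Hlin as [_ [_ [HDscal [HAadd HAscal]]]]. intros Hf Hh.
  unfold coord_form, line_form. rewrite !inner_shift, HAadd, HAscal by auto.
  rewrite !inner_add_l, !inner_add_r, !inner_scal_l, !inner_scal_r. cplx_ring.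
Qed.

Lemma numrange_point_NumRange g : D g -> 0 < hnorm g -> NumRange D A (numrange_point A g).
Proof.
  destruct Hlin as [_ [_ [HDscal [_ HAscal]]]]. intros Hg Hpos.
  exists (hscal (mkC (/ hnorm g) 0) g). split; [auto | split].
  - rewrite hnorm_scal, Cmod_real, Rabs_right by (left; apply Rinv_0_lt_compat; exact Hpos).
    field. lra.
  - rewrite HAscal, inner_scal_l, inner_scal_r by exact Hg. unfold numrange_point.
    apply cplx_ext; simpl; field; lra.
Qed.

Lemma numrange_point_coords lam n g : 0 < hnorm g ->
  eta_coord lam n (numrange_point A g) = Cre (coord_form A lam n g g) / hnorm g ^ 2 /\
  xi_coord lam n (numrange_point A g) = - Cim (coord_form A lam n g g) / hnorm g ^ 2.
Proof.
  intro Hpos. unfold eta_coord, xi_coord, numrange_point, coord_form.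
  rewrite inner_shift, inner_self.
  destruct (inner (A g) g), n, lam; simpl. split; field; lra.
Qed.

Lemma coord_form_unit lam n f : hnorm f = 1 ->
  coord_form A lam n f f = Cmul (Cconj n) (Csub (inner (A f) f) lam).
Proof. intro Hf. unfold coord_form. rewrite inner_shift, inner_self, Hf. f_equal. cplx_ring. Qed.

End Operator.

Lemma line_form_cross_terms_small (w u v r : cplx) (K eps : R) :
  0 < K -> Cmod w <= eps -> Cmod r <= K -> (forall s, 0 <= Cre (line_form w u v r s)) ->
  Cmod (Cadd u (Cconj v)) ^ 2 <= 4 * K * eps.
Proof.
  intros HK Hw Hr Hnonneg.
  set (p := Cadd u (Cconj v)). set (tau := / (2 * K)).
  assert (Htau : tau * K = 1/2) by (unfold tau; field; lra).
  assert (Htau0 : 0 < tau) by (unfold tau; apply Rinv_0_lt_compat; lra).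
  (* the cross terms contribute [Re (conj s p)], which [s = - tau p] makes negative *)
  assert (E : Cre (line_form w u v r (mkC (- (tau * Cre p)) (- (tau * Cim p)))) =
              Cre w - tau * Cmod p ^ 2 + tau ^ 2 * Cmod p ^ 2 * Cre r).
  { rewrite Cmod_sq. unfold line_form, p. simpl. ring. }
  pose proof (Hnonneg (mkC (- (tau * Cre p)) (- (tau * Cim p)))) as Hs. rewrite E in Hs.
  pose proof (Cre_bound w); pose proof (Cre_bound r); pose proof (pow2_ge_0 (Cmod p)).
  assert (Hquad : tau ^ 2 * Cmod p ^ 2 * Cre r <= tau ^ 2 * Cmod p ^ 2 * K)
    by (apply Rmult_le_compat_l; nra).
  replace (tau ^ 2 * Cmod p ^ 2 * K) with (tau / 2 * Cmod p ^ 2) in Hquad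
    by (replace (tau / 2) with (tau * (tau * K)) by (rewrite Htau; field); ring).
  assert (Hp : Cmod p ^ 2 * tau <= (4 * K * eps) * tau) by nra.
  exact (Rmult_le_reg_r _ _ _ Htau0 Hp).
Qed.

Lemma line_form_imaginary_step (w u v r : cplx) (sg t : R) :
  sg = 1 \/ sg = -1 ->
  let q := line_form w u v r (mkC 0 (- (sg * t))) in
  let p := Cadd u (Cconj v) in
  Cre q = Cre w - sg * t * Cim p + t ^ 2 * Cre r /\
  - sg * Cim q = - sg * Cim w - t * Cre p + 2 * t * Cre v - sg * t ^ 2 * Cim r.
Proof. intros Hsg q p. unfold q, p, line_form. destruct Hsg; subst sg; simpl; split; ring. Qed.

(* With [eps = t^2 / (16 K + 16)], the tangential displacement [X >= t/2] gives
   [M X^2 >= (2 K + 2) t^2] for [M = 8 K + 8], while [Y N <= (2 K + 9/8) t^2]. *)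
Lemma curvature_budget (K t eps P X Y N delta : R) :
  0 < K -> 0 < t <= 1 -> t * K <= 1/2 -> 20 * t <= delta ->
  eps * (16 * K + 16) = t ^ 2 -> 0 <= P -> P ^ 2 <= 4 * K * eps ->
  12/7 * t - eps - t * P - t ^ 2 * K <= X <= eps + t * P + 16/7 * t + t ^ 2 * K ->
  0 <= Y <= eps + t * P + t ^ 2 * K ->
  3/7 <= N <= 2 ->
  ((X / N) ^ 2 + (Y / N) ^ 2 < delta ^ 2 -> 0 < X / N ->
     (8 * K + 8) * (X / N) ^ 2 <= Y / N) -> False.
Proof.
  intros HK Ht HtK Hdelta Heps HP HP2 HX HY HN Hcurv.
  assert (Heps0 : 0 < eps) by nra.
  assert (Heps16 : eps <= t ^ 2 / 16) by nra.
  assert (HPt : P <= t / 2).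
  { assert (P ^ 2 <= (t / 2) ^ 2) by nra. nra. }
  assert (Ht2 : t ^ 2 <= t) by nra.
  assert (HtP : t * P <= t ^ 2 / 2) by nra.
  assert (HX' : t / 2 <= X <= 4 * t) by nra.
  assert (HY' : Y <= t ^ 2 * (9/16 + K)) by nra.
  assert (HY2 : Y <= 2 * t) by nra.
  assert (HXY : X ^ 2 + Y ^ 2 <= 20 * t ^ 2).
  { assert (X ^ 2 <= (4 * t) ^ 2) by (apply pow_incr; lra).
    assert (Y ^ 2 <= (2 * t) ^ 2) by (apply pow_incr; lra). nra. }
  assert (HN0 : 0 < N) by lra.
  assert (Hsmall : (X / N) ^ 2 + (Y / N) ^ 2 < delta ^ 2).
  { replace ((X / N) ^ 2 + (Y / N) ^ 2) with ((X ^ 2 + Y ^ 2) / N ^ 2) by (field; lra).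
    apply Rmult_lt_reg_r with (N ^ 2); [nra |].
    replace ((X ^ 2 + Y ^ 2) / N ^ 2 * N ^ 2) with (X ^ 2 + Y ^ 2) by (field; lra).
    assert ((20 * t) ^ 2 <= delta ^ 2) by (apply pow_incr; lra).
    assert ((3/7) ^ 2 <= N ^ 2) by (apply pow_incr; lra).
    assert ((20 * t) ^ 2 * (3/7) ^ 2 <= delta ^ 2 * N ^ 2) by (apply Rmult_le_compat; nra).
    nra. }
  specialize (Hcurv Hsmall ltac:(apply Rdiv_lt_0_compat; lra)).
  apply (Rmult_le_compat_r (N ^ 2)) in Hcurv; [| nra].
  replace ((8 * K + 8) * (X / N) ^ 2 * N ^ 2) with ((8 * K + 8) * X ^ 2) in Hcurv
    by (field; lra).
  replace (Y / N * N ^ 2) with (Y * N) in Hcurv by (field; lra).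
  assert ((t / 2) ^ 2 <= X ^ 2) by (apply pow_incr; lra).
  nra.
Qed.

Lemma line_form_curvature_absurd (w u v r : cplx) (K delta sg t N : R) :
  0 < K -> sg = 1 \/ sg = -1 -> 0 < t <= 1 -> t * K <= 1/2 -> 20 * t <= delta ->
  Cmod w <= t ^ 2 / (16 * K + 16) -> Cmod (Csub v Defs.C1) <= 1/7 -> Cmod r <= K ->
  (forall s, 0 <= Cre (line_form w u v r s)) ->
  3/7 <= N <= 2 ->
  let q := line_form w u v r (mkC 0 (- (sg * t))) in
  ((- Cim q / N) ^ 2 + (Cre q / N) ^ 2 < delta ^ 2 -> 0 < sg * (- Cim q / N) ->
     (8 * K + 8) * (- Cim q / N) ^ 2 <= Cre q / N) -> False.
Proof.
  intros HK Hsg Ht HtK Hdelta Hw Hv Hr Hnonneg HN q Hcurv.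
  set (eps := t ^ 2 / (16 * K + 16)) in Hw.
  set (p := Cadd u (Cconj v)).
  destruct (line_form_imaginary_step w u v r sg t Hsg) as [Hre Him]. fold q p in Hre, Him.
  pose proof (line_form_cross_terms_small w u v r K eps HK Hw Hr Hnonneg) as Hp. fold p in Hp.
  assert (Hv' : 6/7 <= Cre v <= 8/7)
    by (pose proof (Cre_bound (Csub v Defs.C1)); simpl in *; lra).
  pose proof (Cre_bound w); pose proof (Cim_bound w); pose proof (Cre_bound r);
    pose proof (Cim_bound r); pose proof (Cre_bound p); pose proof (Cim_bound p).
  apply (curvature_budget K t eps (Cmod p) (- sg * Cim q) (Cre q) N delta);
    try solve [auto | apply Cmod_ge0 | unfold eps; field; lra].
  - destruct Hsg; subst sg; split; nra.
  - split; [apply Hnonneg |]. destruct Hsg; subst sg; nra.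
  - assert (Hsq : (- sg * Cim q / N) ^ 2 = (- Cim q / N) ^ 2)
      by (destruct Hsg; subst sg; field; lra).
    rewrite Hsq. intros Hsmall Hpos. apply Hcurv; [exact Hsmall |].
    replace (sg * (- Cim q / N)) with (- sg * Cim q / N) by (field; lra). exact Hpos.
Qed.

Lemma ccl_self (S : cplx -> Prop) w : S w -> ccl S w.
Proof.
  intros Hw e He. exists w. split; [exact Hw |].
  replace (Csub w w) with (mkC 0 0) by cplx_ring. rewrite Cmod_real, Rabs_R0. exact He.
Qed.

Lemma ccl_idem (S : cplx -> Prop) w : ccl (ccl S) w -> ccl S w.
Proof.
  intros H e He. destruct (H (e / 2) ltac:(lra)) as [z1 [Hz1 D1]].
  destruct (Hz1 (e / 2) ltac:(lra)) as [z2 [Hz2 D2]]. exists z2. split; [exact Hz2 |].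
  replace (Csub w z2) with (Cadd (Csub w z1) (Csub z1 z2)) by cplx_ring.
  pose proof (Cmod_add (Csub w z1) (Csub z1 z2)). lra.
Qed.

Lemma l_normal_supporting Om lam n : l_normal Om lam n ->
  Cmod n = 1 /\ forall w, Om w -> 0 <= eta_coord lam n w.
Proof.
  intros [Hcorner Hsmooth]. destruct (classic (corner_point Om lam)) as [C | C].
  - destruct (Hcorner C) as [al [[Hn [Hal Hin]] _]]. split; [exact Hn |].
    intros w Hw. specialize (Hin w Hw). unfold in_sector in Hin. unfold eta_coord.
    assert (0 <= cos al) by (apply cos_ge_0; pose proof PI_RGT_0; lra).
    pose proof (Cmod_ge0 (Csub w lam)). nra.
  - exact (Hsmooth C).
Qed.

Definition gamma_l_side_infinite (Om : cplx -> Prop) (lam n : cplx) (sg : R) : Prop :=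
  forall M, exists delta, 0 < delta /\ forall eps, 0 < eps < delta ->
    forall w, cbdry Om w ->
      xi_coord lam n w ^ 2 + eta_coord lam n w ^ 2 <= eps ^ 2 ->
      xi_coord lam n w <> 0 -> 0 < sg * xi_coord lam n w ->
      M <= eta_coord lam n w / xi_coord lam n w ^ 2.

Lemma unilateral_infinite_curvature_side Om lam :
  unilateral_infinite_curvature Om lam ->
  exists n sg, l_normal Om lam n /\ (sg = 1 \/ sg = -1) /\ gamma_l_side_infinite Om lam n sg.
Proof.
  intros [n [Hn [Hplus | Hminus]]]; exists n.
  - exists 1. split; [exact Hn | split; [now left |]].
    intro M. destruct (Hplus M) as [d [Hd Hb]]. exists d. split; [exact Hd |].
    intros eps Heps w Hw Hsm Hxi Hsg. apply (Hb eps Heps w); auto. lra.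
  - exists (-1). split; [exact Hn | split; [now right |]].
    intro M. destruct (Hminus M) as [d [Hd Hb]]. exists d. split; [exact Hd |].
    intros eps Heps w Hw Hsm Hxi Hsg. apply (Hb eps Heps w); auto. lra.
Qed.

Definition push_down (w n : cplx) (t : R) : cplx := Csub w (Cmul (mkC t 0) n).

Lemma xi_push_down lam n w t : xi_coord lam n (push_down w n t) = xi_coord lam n w.
Proof. unfold xi_coord, push_down. destruct w, n, lam. simpl. ring. Qed.

Lemma eta_push_down lam n w t : Cmod n = 1 ->
  eta_coord lam n (push_down w n t) = eta_coord lam n w - t.
Proof.
  intro Hn. pose proof (Cmod_sq n) as En. rewrite Hn in En.
  unfold eta_coord, push_down. destruct w, n, lam. simpl in *.
  pose proof (f_equal (Rmult t) En). lra.
Qed.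

Lemma push_down_dist w n a b : Cmod n = 1 ->
  Cmod (Csub (push_down w n a) (push_down w n b)) = Rabs (a - b).
Proof.
  intro Hn. replace (Csub (push_down w n a) (push_down w n b)) with (Cmul (mkC (b - a) 0) n)
    by (unfold push_down; cplx_ring).
  rewrite Cmod_mul, Hn, Cmod_real, Rabs_minus_sym. ring.
Qed.

Section ClosedSupportedSet.

Variables (Om : cplx -> Prop) (lam n : cplx).
Hypothesis Om_closed : forall w, ccl Om w -> Om w.
Hypothesis n_unit : Cmod n = 1.
Hypothesis Om_support : forall w, Om w -> 0 <= eta_coord lam n w.

(* Slide [w] against the normal as far as [Om] allows; the last point is on the boundary. *)
Lemma boundary_point_below w : Om w ->
  exists t, 0 <= t <= eta_coord lam n w /\ cbdry Om (push_down w n t).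
Proof.
  intro Hw. set (E := fun t => 0 <= t <= eta_coord lam n w /\ Om (push_down w n t)).
  assert (HE0 : E 0).
  { split; [split; [lra | auto] |].
    replace (push_down w n 0) with w by (unfold push_down; cplx_ring). exact Hw. }
  assert (Hb : bound E) by (exists (eta_coord lam n w); intros t [Ht _]; lra).
  destruct (completeness E Hb (ex_intro _ 0 HE0)) as [ts [Hub Hlub]].
  assert (Hts : 0 <= ts <= eta_coord lam n w).
  { split; [apply Hub, HE0 | apply Hlub; intros t [Ht _]; lra]. }
  exists ts. split; [exact Hts | split].
  - intros e He. exists (push_down w n ts). split.
    + apply Om_closed. intros e' He'. apply NNPP. intro Hno.
      assert (ts <= ts - e') by (apply Hlub; intros t Et; apply Rnot_lt_le; intro Hlt;
        apply Hno; exists (push_down w n t); split; [apply Et |];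
        rewrite push_down_dist, Rabs_right by (auto || (pose proof (Hub t Et); lra)); lra).
      lra.
    + rewrite push_down_dist, Rminus_diag, Rabs_R0 by exact n_unit. exact He.
  - intros [e [He Hint]].
    assert (Hin : Om (push_down w n (ts + e / 2))).
    { apply Hint. rewrite push_down_dist, Rabs_right by (auto || lra). lra. }
    destruct (Rle_lt_dec (ts + e / 2) (eta_coord lam n w)).
    + assert (ts + e / 2 <= ts) by (apply Hub; split; [lra | exact Hin]). lra.
    + pose proof (Om_support _ Hin) as Heta. rewrite eta_push_down in Heta by exact n_unit. lra.
Qed.

Lemma curvature_bound_near sg : gamma_l_side_infinite Om lam n sg ->
  forall M, exists delta, 0 < delta /\ forall w, Om w ->
    xi_coord lam n w ^ 2 + eta_coord lam n w ^ 2 < delta ^ 2 ->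
    0 < sg * xi_coord lam n w -> M * xi_coord lam n w ^ 2 <= eta_coord lam n w.
Proof.
  intros Hcurv M. destruct (Hcurv M) as [d [Hd Hb]].
  exists (d / 2). split; [lra |]. intros w Hw Hsm Hsg.
  destruct (boundary_point_below w Hw) as [t [Ht Hbd]].
  assert (Hxi : xi_coord lam n w <> 0) by (intro Z; rewrite Z in Hsg; lra).
  assert (Hxi2 : 0 < xi_coord lam n w ^ 2) by (rewrite <- Rsqr_pow2; exact (Rsqr_pos_lt _ Hxi)).
  pose proof (Hb (d / 2) ltac:(lra) _ Hbd) as HM.
  rewrite xi_push_down, eta_push_down in HM by exact n_unit.
  assert (HM' : M <= (eta_coord lam n w - t) / xi_coord lam n w ^ 2).
  { apply HM; [| exact Hxi | exact Hsg].
    assert ((eta_coord lam n w - t) ^ 2 <= eta_coord lam n w ^ 2) by nra. nra. }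
  apply (Rmult_le_compat_r (xi_coord lam n w ^ 2)) in HM'; [| lra].
  replace ((eta_coord lam n w - t) / xi_coord lam n w ^ 2 * xi_coord lam n w ^ 2)
    with (eta_coord lam n w - t) in HM' by (field; lra).
  lra.
Qed.

Lemma exists_outside_near sg : sg = 1 \/ sg = -1 -> gamma_l_side_infinite Om lam n sg ->
  forall rho, 0 < rho -> exists z, ~ Om z /\ Cmod (Csub z lam) < rho.
Proof.
  intros Hsg Hcurv rho Hrho.
  destruct (curvature_bound_near sg Hcurv 1) as [delta [Hd Hbend]].
  set (x := Rmin rho delta / 2).
  assert (Hx : 0 < x < rho /\ x < delta)
    by (unfold x; pose proof (Rmin_l rho delta); pose proof (Rmin_r rho delta);
        pose proof (Rmin_glb_lt rho delta 0 Hrho Hd); lra).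
  pose proof (Cmod_sq n) as En. rewrite n_unit in En.
  (* the tangent point at distance [x] on the curved side *)
  set (z := Cadd lam (Cmul (mkC (sg * x) 0) (Cmul (Copp Ci) n))).
  assert (Hxi : xi_coord lam n z = sg * x)
    by (unfold xi_coord, z; destruct n, lam; simpl in *; destruct Hsg; subst sg; nra).
  assert (Heta : eta_coord lam n z = 0)
    by (unfold eta_coord, z; destruct n, lam; simpl in *; ring).
  exists z. split.
  - intro Hz. specialize (Hbend z Hz). rewrite Hxi, Heta in Hbend.
    destruct Hsg; subst sg; nra.
  - apply Rle_lt_trans with x; [| lra].
    apply Cmod_le; [lra |]. unfold z. destruct n, lam; simpl in *.
    destruct Hsg; subst sg; nra.
Qed.

End ClosedSupportedSet.

Section ResolventSolution.

Variables (Hs : HilbertSpace) (D : Hs -> Prop) (A : Hs -> Hs).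
Variables (c : R) (lam z n : cplx) (f h : Hs).
Hypothesis c_pos : 0 < c.
Hypothesis bounded_below : forall x, D x -> c * hnorm x <= hnorm (shift A lam x).
Hypothesis n_unit : Cmod n = 1.
Hypothesis z_near : Cmod (Csub z lam) <= c / 8.
Hypothesis f_unit : hnorm f = 1.
Hypothesis h_dom : D h.
Hypothesis h_solves : shift A z h = hscal n f.

Lemma resolvent_solution_norm : 7 * c * hnorm h <= 8.
Proof.
  pose proof (bounded_below h h_dom) as B.
  rewrite (shift_change_point _ A lam z), h_solves in B.
  pose proof (hnorm_triangle _ (hscal n f) (hscal (Csub z lam) h)) as T.
  rewrite !hnorm_scal, n_unit, f_unit in T.
  pose proof (hnorm_ge0 _ h). pose proof (Cmod_ge0 (Csub z lam)).
  assert (Cmod (Csub z lam) * hnorm h <= c / 8 * hnorm h) by (apply Rmult_le_compat_r; lra).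
  lra.
Qed.

Lemma coord_form_resolvent_solution y :
  coord_form A lam n h y = Cadd (inner f y) (Cmul (Cmul (Cconj n) (Csub z lam)) (inner h y)).
Proof.
  assert (Hnn : Cmul (Cconj n) n = Defs.C1).
  { pose proof (Cmod_sq n) as En. rewrite n_unit in En.
    apply cplx_ext; simpl in *; lra. }
  unfold coord_form. rewrite (shift_change_point _ A lam z), h_solves, inner_add_l, !inner_scal_l.
  transitivity (Cadd (Cmul (Cmul (Cconj n) n) (inner f y))
                     (Cmul (Cmul (Cconj n) (Csub z lam)) (inner h y))); [cplx_ring |].
  rewrite Hnn. f_equal. cplx_ring.
Qed.

Lemma coord_form_resolvent_solution_bounds :
  Cmod (Csub (coord_form A lam n h f) Defs.C1) <= 1/7 /\ Cmod (coord_form A lam n h h) <= 2 / c.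
Proof.
  pose proof resolvent_solution_norm as HH. pose proof (hnorm_ge0 _ h).
  set (e := Cmul (Cconj n) (Csub z lam)).
  assert (He : Cmod e <= c / 8) by (unfold e; rewrite Cmod_mul, Cmod_conj, n_unit; lra).
  pose proof (Cmod_ge0 e).
  assert (HeH : Cmod e * hnorm h <= 1 / 7).
  { apply Rle_trans with (c / 8 * hnorm h); [apply Rmult_le_compat_r; lra | lra]. }
  rewrite !coord_form_resolvent_solution. fold e. split.
  - rewrite inner_self, f_unit.
    replace (Csub (Cadd (mkC (1 ^ 2) 0) (Cmul e (inner h f))) Defs.C1) with (Cmul e (inner h f))
      by cplx_ring.
    rewrite Cmod_mul. pose proof (Cauchy_Schwarz _ h f) as CS. rewrite f_unit in CS.
    apply Rle_trans with (Cmod e * hnorm h); [apply Rmult_le_compat_l; lra | exact HeH].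
  - rewrite inner_self. eapply Rle_trans; [apply Cmod_add |].
    rewrite Cmod_mul, Cmod_real, Rabs_right by nra.
    pose proof (Cauchy_Schwarz _ f h) as CS. rewrite f_unit in CS.
    assert (hnorm h <= 8 / (7 * c)).
    { apply (Rmult_le_reg_l (7 * c)); [lra |].
      replace (7 * c * (8 / (7 * c))) with 8 by (field; lra). lra. }
    assert (Cmod e * hnorm h ^ 2 <= 1 / 7 * (8 / (7 * c))) by nra.
    replace (2 / c) with (8 / (7 * c) + 1 / 7 * (8 / (7 * c)) + 34 / (49 * c)) by (field; lra).
    assert (0 < 34 / (49 * c)) by (apply Rdiv_lt_0_compat; lra). lra.
Qed.

End ResolventSolution.

Section CurvedBoundary.

Variables (Hs : HilbertSpace) (D : Hs -> Prop) (A : Hs -> Hs) (lam n : cplx).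
Hypothesis Hlin : is_lin_op D A.
Hypothesis n_unit : Cmod n = 1.

Lemma coord_form_from_closure (P : R -> R -> Prop) :
  (forall w, ccl (NumRange D A) w -> P (xi_coord lam n w) (eta_coord lam n w)) ->
  forall g, D g -> 0 < hnorm g ->
  P (- Cim (coord_form A lam n g g) / hnorm g ^ 2) (Cre (coord_form A lam n g g) / hnorm g ^ 2).
Proof.
  intros HP g Hg Hpos. destruct (numrange_point_coords _ A lam n g Hpos) as [Eeta Exi].
  rewrite <- Eeta, <- Exi. apply HP, ccl_self, (numrange_point_NumRange _ D A Hlin g Hg Hpos).
Qed.

Lemma coord_form_nonneg :
  (forall w, ccl (NumRange D A) w -> 0 <= eta_coord lam n w) ->
  forall g, D g -> 0 <= Cre (coord_form A lam n g g).
Proof.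
  intros Hsup g Hg. destruct (hnorm_ge0 _ g) as [Hpos | Hz].
  - pose proof (coord_form_from_closure (fun _ y => 0 <= y) Hsup g Hg Hpos) as H. cbv beta in H.
    assert (0 < hnorm g ^ 2) by (apply pow_lt; exact Hpos).
    apply (Rmult_le_compat_r (hnorm g ^ 2)) in H; [| lra].
    replace (Cre (coord_form A lam n g g) / hnorm g ^ 2 * hnorm g ^ 2)
      with (Cre (coord_form A lam n g g)) in H by (field; lra).
    lra.
  - apply eq_sym, hnorm_eq0 in Hz. subst g. unfold coord_form. rewrite inner_0_r. simpl. lra.
Qed.

Lemma resolvent_near_curved_boundary_absurd (c delta sg t : R) (z : cplx) (f h : Hs) :
  0 < c -> (forall x, D x -> c * hnorm x <= hnorm (shift A lam x)) ->
  sg = 1 \/ sg = -1 -> 0 < t <= 1 -> t <= c / 4 -> 20 * t <= delta ->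
  (forall w, ccl (NumRange D A) w -> 0 <= eta_coord lam n w) ->
  (forall w, ccl (NumRange D A) w ->
     xi_coord lam n w ^ 2 + eta_coord lam n w ^ 2 < delta ^ 2 -> 0 < sg * xi_coord lam n w ->
     (8 * (2 / c) + 8) * xi_coord lam n w ^ 2 <= eta_coord lam n w) ->
  Cmod (Csub z lam) <= c / 8 ->
  D f -> hnorm f = 1 -> Cmod (Csub lam (inner (A f) f)) < t ^ 2 / (16 * (2 / c) + 16) ->
  D h -> shift A z h = hscal n f -> False.
Proof.
  intros Hc Hbb Hsg Ht Htc Htd Hsup Hbend Hz Hf Hf1 Hw Hh Hsol.
  set (K := 2 / c) in *.
  assert (HK : 0 < K) by (apply Rdiv_lt_0_compat; lra).
  pose proof (resolvent_solution_norm _ D A c lam z n f h Hbb n_unit Hz Hf1 Hh Hsol) as HH.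
  destruct (coord_form_resolvent_solution_bounds _ D A c lam z n f h Hc Hbb n_unit Hz Hf1 Hh
              Hsol) as [Hv Hr].
  set (s := mkC 0 (- (sg * t))). set (g := hadd f (hscal s h)).
  assert (Hg : D g) by (destruct Hlin as [_ [Hadd [Hscal _]]]; unfold g; auto).
  assert (HtH : t * hnorm h <= 2 / 7).
  { pose proof (hnorm_ge0 _ h).
    apply Rle_trans with (c / 4 * hnorm h); [apply Rmult_le_compat_r |]; lra. }
  assert (Hst : Cmod s <= t)
    by (apply Cmod_le; [lra |]; unfold s; simpl; destruct Hsg; subst sg; nra).
  assert (HN : 3/7 <= hnorm g ^ 2 <= 2).
  { pose proof (hnorm_triangle _ f (hscal s h)) as T1.
    pose proof (hnorm_triangle_rev _ f (hscal s h)) as T2.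
    rewrite hnorm_scal, Hf1 in T1, T2. fold g in T1, T2.
    pose proof (hnorm_ge0 _ h). pose proof (Cmod_ge0 s).
    assert (Cmod s * hnorm h <= 2 / 7) by nra. split; nra. }
  apply (line_form_curvature_absurd (coord_form A lam n f f) (coord_form A lam n f h)
           (coord_form A lam n h f) (coord_form A lam n h h) K delta sg t (hnorm g ^ 2));
    try assumption.
  - unfold K. apply (Rmult_le_reg_l c); [lra |]. replace (c * (t * (2 / c))) with (2 * t)
      by (field; lra). lra.
  - rewrite (coord_form_unit _ A lam n f Hf1), Cmod_mul, Cmod_conj, n_unit, Cmod_sub_sym. lra.
  - intro s'. rewrite <- (coord_form_line _ D A Hlin lam n f h s' Hf Hh).
    apply coord_form_nonneg; [exact Hsup |]. destruct Hlin as [_ [Hadd [Hscal _]]]; auto.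
  - fold s. rewrite <- (coord_form_line _ D A Hlin lam n f h s Hf Hh). fold g.
    apply (coord_form_from_closure (fun x y => x ^ 2 + y ^ 2 < delta ^ 2 -> 0 < sg * x ->
                                      (8 * K + 8) * x ^ 2 <= y)); [exact Hbend | exact Hg |].
    pose proof (hnorm_ge0 _ g). nra.
Qed.

End CurvedBoundary.

Lemma exists_small_step c delta : 0 < c -> 0 < delta ->
  exists t, (0 < t <= 1 /\ t <= c / 4 /\ 20 * t <= delta) /\ 0 < t ^ 2 / (16 * (2 / c) + 16).
Proof.
  intros Hc Hd. exists (Rmin (Rmin (c / 4) (delta / 20)) 1).
  pose proof (Rmin_l (Rmin (c / 4) (delta / 20)) 1).
  pose proof (Rmin_r (Rmin (c / 4) (delta / 20)) 1).
  pose proof (Rmin_l (c / 4) (delta / 20)). pose proof (Rmin_r (c / 4) (delta / 20)).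
  assert (0 < Rmin (Rmin (c / 4) (delta / 20)) 1) by (repeat apply Rmin_glb_lt; lra).
  assert (0 < 2 / c) by (apply Rdiv_lt_0_compat; lra).
  split; [lra | apply Rdiv_lt_0_compat; [apply pow_lt |]; lra].
Qed.

Theorem mainTheorem4 (Hs : HilbertSpace) (D : Hs -> Prop) (A : Hs -> Hs) (lam : cplx) :
  is_lin_op D A ->
  densely_defined D ->
  closed_op D A ->
  (exists w, cinterior (NumRange D A) w) ->
  (exists w, ~ NumRange D A w) ->
  (forall y, D y -> adj_dom D A y) ->
  (forall w, spectrum D A w -> ccl (NumRange D A) w) ->
  cbdry (NumRange D A) lam ->
  unilateral_infinite_curvature (ccl (NumRange D A)) lam ->
  approx_point_spectrum D A lam.
Proof.
  intros Hlin _ _ _ _ _ Hspec [Hlam _] Hcurv.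
  apply NNPP. intro Hnap.
  destruct (not_approx_point_spectrum_bounded_below _ D A Hlin lam Hnap) as [c [Hc Hbb]].
  destruct (unilateral_infinite_curvature_side _ _ Hcurv) as [n [sg [Hln [Hsg Hside]]]].
  destruct (l_normal_supporting _ _ _ Hln) as [Hn Hsup].
  pose proof (ccl_idem (NumRange D A)) as Hclosed.
  destruct (exists_outside_near _ lam n Hclosed Hn Hsup sg Hsg Hside (c / 8)) as [z [Hz Hzl]];
    [lra |].
  assert (Hres : resolvent D A z) by (apply NNPP; intro Hzs; exact (Hz (Hspec z Hzs))).
  destruct (curvature_bound_near _ lam n Hclosed Hn Hsup sg Hside (8 * (2 / c) + 8))
    as [delta [Hd Hbend]].
  destruct (exists_small_step c delta Hc Hd) as [t [Ht Heps]].
  destruct (Hlam _ Heps) as [w [[f [Hf [Hf1 ->]]] Hw]].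
  destruct (proj1 Hres (hscal n f)) as [h [Hh Hsol]].
  apply (resolvent_near_curved_boundary_absurd _ D A lam n Hlin Hn c delta sg t z f h);
    solve [tauto | lra].
Qed.
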